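(* Let $d,m,n\ge1$, $\gamma\in[0,1)$, $\alpha,\beta>0$ and $D=3d+2m+2$. Let $\mathbf P,\mathbf V\in\mathbb R^{D\times D}$ be partitioned conformally with $D=(2d+m+1)+(d+m+1)$ as $\mathbf P=\begin{bmatrix}\mathbf P_{11}&\mathbf P_{12}\\ \mathbf P_{21}&\mathbf P_{22}\end{bmatrix}$, $\mathbf V=\begin{bmatrix}\mathbf V_{11}&\mathbf V_{12}\\ \mathbf V_{21}&\mathbf V_{22}\end{bmatrix}$, and suppose $$\mathbf P_{12}=\begin{bmatrix}\mathbf 0_{d\times1}&\mathbf 0_{d\times m}&-\mathbf I_d\\ \mathbf 0_{d\times1}&\mathbf 0_{d\times m}&\mathbf I_d\\ 1&\mathbf 0_{1\times m}&\mathbf 0_{1\times d}\\ \mathbf 0_{m\times1}&\mathbf 0_{m\times m}&\mathbf 0_{m\times d}\end{bmatrix},\qquad \mathbf P_{22}=\mathbf 0,$$ the last $d+m$ rows of $\mathbf V_{21}$ equal $\begin{bmatrix}\mathbf 0_{m\times d}&\mathbf 0_{m\times d}&\mathbf 0_{m\times1}&\alpha\mathbf I_m\\ \beta\mathbf I_d&\mathbf 0_{d\times d}&\mathbf 0_{d\times1}&\mathbf 0_{d\times m}\end{bmatrix}$, the last $d+m$ rows of $\mathbf V_{22}$ are zero, and $\mathbf P_{11},\mathbf P_{21},\mathbf V_{11},\mathbf V_{12}$ and the first rows of $\mathbf V_{21},\mathbf V_{22}$ are arbitrary. Then for every $c\ne0$ and every input, $\mathsf{TF}_{(c\mathbf P,c^{-1}\mathbf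 V)}(\mathbf H)=[\boldsymbol\lambda_{\mathrm{AC}};\mathbf w_{\mathrm{AC}}]$, i.e. the transformer exactly implements the batch actor-critic update.
   Context: A linear self-attention block with parameters $(\mathbf P,\mathbf V)$ maps $\mathbf H\in\mathbb R^{D\times(n+1)}$ to $\mathbf H_{\mathrm{out}}=\mathbf H+\frac1n(\mathbf V\mathbf H)(\mathbf H^\top\mathbf P\mathbf H)$; here the readout $\mathsf{TF}_{(\mathbf P,\mathbf V)}(\mathbf H)\in\mathbb R^{m+d}$ is the vector of the last $d+m$ entries of the last column of $\mathbf H_{\mathrm{out}}$. Actor-critic data: value feature map $\boldsymbol\phi_V:\mathcal S\to\mathbb R^d$, policy feature map $\boldsymbol\phi_\pi:\mathcal S\times\mathcal A\to\mathbb R^m$ (finite action set), actor parameter $\boldsymbol\lambda\in\mathbb R^m$, critic parameter $\mathbf w\in\mathbb R^d$, softmax policy $\pi_{\boldsymbol\lambda}(a\mid s)\propto\exp(\boldsymbol\lambda^\top\boldsymbol\phi_\pi(s,a))$, score $\mathbf g_{\boldsymbol\lambda}(s,a)=\boldsymbol\phi_\pi(s,a)-\sum_b\boldsymbol\phi_\pi(s,b)\pi_{\boldsymbol\lambda}(b\mid s)$, and a trajectory $(s_0,a_0,r_1,\dots,r_n,s_n,a_n)$. Let $\delta_i=r_{i+1}+\gamma\mathbf w^\top\boldsymbol\phi_V(s_{i+1})-\mathbf w^\top\boldsymbol\phi_V(s_i)$. The batch actor-critic update is $\mathbf w_{\mathrm{AC}}=\mathbf w+\frac{\beta}{n}\sum_{i=0}^{n-1}\delta_i\boldsymbol\phi_V(s_i)$,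 $\boldsymbol\lambda_{\mathrm{AC}}=\boldsymbol\lambda+\frac{\alpha}{n}\sum_{i=0}^{n-1}\gamma^i\delta_i\mathbf g_{\boldsymbol\lambda}(s_i,a_i)$. The prompt $\mathbf H\in\mathbb R^{D\times(n+1)}$ has, for $i=0,\dots,n-1$, column $i+1$ equal to $[\boldsymbol\phi_V(s_i);\gamma\boldsymbol\phi_V(s_{i+1});r_{i+1};\gamma^i\mathbf g_{\boldsymbol\lambda}(s_i,a_i);\mathbf 0_{d+m+1}]$, and last column $[\mathbf 0_{2d+m+1};1;\boldsymbol\lambda;\mathbf w]$. *)

From HB Require Import structures.
From mathcomp Require Import all_boot all_order all_algebra.
From mathcomp Require Import reals sequences exp.
Set Implicit Arguments. Unset Strict Implicit. Unset Printing Implicit Defensive.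
Import Order.TTheory GRing.Theory Num.Theory.
Local Open Scope ring_scope.

Section AC.
Variable R : realType.
Variables (d m : nat).

Definition ptop := (d + d + 1 + m)%N.
Definition qbot := (1 + m + d)%N.

Definition softmax (S : Type) (A : finType) (phiPi : S -> A -> 'cV[R]_m)
  (lam : 'cV[R]_m) (s : S) (b : A) : R :=
  expR (\sum_(k < m) lam k 0 * phiPi s b k 0) /
  \sum_(b' : A) expR (\sum_(k < m) lam k 0 * phiPi s b' k 0).

Definition score (S : Type) (A : finType) (phiPi : S -> A -> 'cV[R]_m)
  (lam : 'cV[R]_m) (s : S) (a : A) : 'cV[R]_m :=
  phiPi s a - \sum_(b : A) softmax phiPi lam s b *: phiPi s b.

Definition dotv k (u v : 'cV[R]_k) : R := \sum_(i < k) u i 0 * v i 0.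

Definition tderr (S : Type) (phiV : S -> 'cV[R]_d) (gamma : R) (w : 'cV[R]_d)
  (s : nat -> S) (r : nat -> R) (i : nat) : R :=
  r i.+1 + gamma * dotv w (phiV (s i.+1)) - dotv w (phiV (s i)).

Definition w_AC (S : Type) (phiV : S -> 'cV[R]_d) (gamma beta : R) (w : 'cV[R]_d)
  (n : nat) (s : nat -> S) (r : nat -> R) : 'cV[R]_d :=
  w + (beta / n%:R) *: \sum_(i < n) tderr phiV gamma w s r i *: phiV (s i).

Definition lam_AC (S : Type) (A : finType) (phiV : S -> 'cV[R]_d)
  (phiPi : S -> A -> 'cV[R]_m) (gamma alpha : R) (lam : 'cV[R]_m) (w : 'cV[R]_d)
  (n : nat) (s : nat -> S) (a : nat -> A) (r : nat -> R) : 'cV[R]_m :=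
  lam + (alpha / n%:R) *:
    \sum_(i < n) (gamma ^+ i * tderr phiV gamma w s r i) *: score phiPi lam (s i) (a i).

(* Column i+1 (1-indexed) of the prompt, for sample i = 0..n-1 (top part; bottom is 0) *)
Definition data_col (S : Type) (A : finType) (phiV : S -> 'cV[R]_d)
  (phiPi : S -> A -> 'cV[R]_m) (gamma : R) (lam : 'cV[R]_m)
  (s : nat -> S) (a : nat -> A) (r : nat -> R) (i : nat) : 'cV[R]_ptop :=
  col_mx (col_mx (col_mx (phiV (s i)) (gamma *: phiV (s i.+1))) (r i.+1)%:M)
         (gamma ^+ i *: score phiPi lam (s i) (a i)).

Definition prompt (S : Type) (A : finType) (phiV : S -> 'cV[R]_d)
  (phiPi : S -> A -> 'cV[R]_m) (gamma : R) (lam : 'cV[R]_m) (w : 'cV[R]_d)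
  (n : nat) (s : nat -> S) (a : nat -> A) (r : nat -> R) :
  'M[R]_(ptop + qbot, n + 1) :=
  row_mx
    (col_mx (\matrix_(k < ptop, j < n) data_col phiV phiPi gamma lam s a r j k 0)
            (0 : 'M_(qbot, n)))
    (col_mx (0 : 'cV_ptop) (col_mx (col_mx (1%:M : 'cV_1) lam) w)).

Definition lsa n (P V : 'M[R]_(ptop + qbot)) (H : 'M[R]_(ptop + qbot, n + 1)) :
  'M[R]_(ptop + qbot, n + 1) :=
  H + (n%:R)^-1 *: ((V *m H) *m (H^T *m P *m H)).

(* Readout: last m+d entries of the last column of H_out *)
Definition TF n (P V : 'M[R]_(ptop + qbot)) (H : 'M[R]_(ptop + qbot, n + 1)) :
  'cV[R]_(m + d) :=
  let c := rsubmx (dsubmx (lsa P V H)) : 'cV[R]_qbot in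
  col_mx (dsubmx (usubmx c : 'cV[R]_(1 + m))) (dsubmx c).

Definition P12 : 'M[R]_(ptop, qbot) :=
  col_mx (col_mx (col_mx
    (row_mx (row_mx (0 : 'M_(d, 1)) (0 : 'M_(d, m))) (- (1%:M : 'M_d)))
    (row_mx (row_mx (0 : 'M_(d, 1)) (0 : 'M_(d, m))) (1%:M : 'M_d)))
    (row_mx (row_mx (1 : 'M_(1, 1)) (0 : 'M_(1, m))) (0 : 'M_(1, d))))
    (0 : 'M_(m, qbot)).

Definition V21_lam (alpha : R) : 'M[R]_(m, ptop) :=
  row_mx (row_mx (row_mx (0 : 'M_(m, d)) (0 : 'M_(m, d))) (0 : 'M_(m, 1))) (alpha%:M : 'M_m).
Definition V21_w (beta : R) : 'M[R]_(d, ptop) :=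
  row_mx (row_mx (row_mx (beta%:M : 'M_d) (0 : 'M_d)) (0 : 'M_(d, 1))) (0 : 'M_(d, m)).

End AC.

From HB Require Import structures.
From mathcomp Require Import all_boot all_order all_algebra.
From mathcomp Require Import reals sequences exp.
From mathcomp Require Import ring.
Import Order.TTheory GRing.Theory Num.Theory.
Local Open Scope ring_scope.

(* The prompt is block diagonal: the data columns fill the top-left block and
   the state [1; lambda; w] the bottom-right corner.  Because P22 = 0, the
   query of the last column is H^T P12 [1; lambda; w], whose i-th entry is the
   TD error delta_i; the lower rows of V21 then turn the delta-weighted sum of
   the data columns into the actor and critic steps, while V22 only meets the
   zero lower half of that sum.  The identity is purely algebraic. *)

Lemma lsa_scale_invariant (R : realType) (d m n : nat)
    (P V : 'M[R]_(ptop d m + qbot d m)) (H : 'M[R]_(ptop d m + qbot d m, n + 1))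
    (c : R) :
  c != 0 -> lsa (c *: P) (c^-1 *: V) H = lsa P V H.
Proof.
move=> c_neq0; rewrite /lsa -scalemxAl -scalemxAr -!scalemxAl -scalemxAr.
by rewrite [c^-1 *: _]scalerA mulVf // scale1r.
Qed.

Lemma attention_block_diag_corner (R : pzRingType) (p q n l : nat)
    (X : 'M[R]_(p, n)) (y : 'M[R]_(q, l)) (P V : 'M[R]_(p + q)) :
  drsubmx P = 0 ->
  let H := block_mx X 0 0 y in
  rsubmx (dsubmx ((V *m H) *m (H^T *m P *m H)))
  = dlsubmx V *m (X *m (X^T *m (ursubmx P *m y))).
Proof.
move=> P22_0 H.
have rH : rsubmx H = col_mx 0 y by rewrite /H block_mxEh row_mxKr.
have Py : P *m col_mx 0 y = col_mx (ursubmx P *m y) 0.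
  by rewrite -{1}[P]submxK mul_block_col !mulmx0 !add0r P22_0 mul0mx.
rewrite -mul_dsub_mx -!mulmxA -!mulmx_rsub rH Py /H tr_block_mx.
rewrite !mul_block_col !mulmx0 !addr0 trmx0 mul0mx.
rewrite -mul_dsub_mx -mulmxA mul_block_col !mulmx0 !addr0 mul0mx.
by rewrite -[dsubmx V]hsubmxK mul_row_col mulmx0 addr0.
Qed.

Section ActorCriticPrompt.

Variables (R : realType) (d m : nat) (S : Type) (A : finType).
Variables (phiV : S -> 'cV[R]_d) (phiPi : S -> A -> 'cV[R]_m).
Variables (gamma : R) (lam : 'cV[R]_m) (w : 'cV[R]_d).
Variables (s : nat -> S) (a : nat -> A) (r : nat -> R).

Local Notation col := (data_col phiV phiPi gamma lam s a r).
Local Notation tderr := (tderr phiV gamma w s r).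

Definition data_mx n : 'M[R]_(ptop d m, n) := \matrix_(k < ptop d m, j < n) col j k 0.

Definition ac_state : 'cV[R]_(qbot d m) := col_mx (col_mx 1%:M lam) w.

Lemma prompt_block_diag n :
  prompt phiV phiPi gamma lam w n s a r = block_mx (data_mx n) 0 0 ac_state.
Proof. by rewrite /prompt block_mxEh. Qed.

Lemma P12_mul_ac_state :
  P12 R d m *m ac_state = col_mx (col_mx (col_mx (- w) w) 1%:M) 0.
Proof.
by rewrite /P12 /ac_state !mul_col_mx !mul_row_col !mul0mx !add0r mulNmx !mul1mx !addr0.
Qed.

Lemma trmx_mul_dotv k (u v : 'cV[R]_k) : u^T *m v = (dotv v u)%:M.
Proof.
apply/matrixP => i j; rewrite (ord1 i) (ord1 j) !mxE mulr1n.
by apply: eq_bigr => l _; rewrite mxE mulrC.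
Qed.

Lemma tr_data_col_query i : (col i)^T *m (P12 R d m *m ac_state) = (tderr i)%:M.
Proof.
rewrite P12_mul_ac_state /data_col !tr_col_mx !mul_row_col mulmx0 addr0.
rewrite mulmx1 tr_scalar_mx mulmxN linearZ /= -scalemxAl !trmx_mul_dotv /tderr.
by rewrite scale_scalar_mx -raddfN -!raddfD /=; congr _%:M; ring.
Qed.

Lemma data_mx_query_weighting n :
  data_mx n *m ((data_mx n)^T *m (P12 R d m *m ac_state))
  = \sum_(i < n) tderr i *: col i.
Proof.
apply/matrixP => k l; rewrite (ord1 l) mxE summxE; apply: eq_bigr => i _.
have -> : ((data_mx n)^T *m (P12 R d m *m ac_state)) i 0
          = ((col i)^T *m (P12 R d m *m ac_state)) 0 0.
  by rewrite !mxE; apply: eq_bigr => k' _; rewrite !mxE.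
by rewrite tr_data_col_query !mxE mulr1n mulrC.
Qed.

Lemma V21_lam_mul_data_col (alpha : R) i :
  V21_lam d m alpha *m col i = (alpha * gamma ^+ i) *: score phiPi lam (s i) (a i).
Proof.
by rewrite /V21_lam /data_col !mul_row_col !mul0mx !add0r mul_scalar_mx scalerA.
Qed.

Lemma V21_w_mul_data_col (beta : R) i : V21_w d m beta *m col i = beta *: phiV (s i).
Proof. by rewrite /V21_w /data_col !mul_row_col !mul0mx !addr0 mul_scalar_mx. Qed.

End ActorCriticPrompt.

Theorem theorem3 (R : realType) (d m n : nat) (hd : (0 < d)%N) (hm : (0 < m)%N)
  (hn : (0 < n)%N) (gamma alpha beta : R) (hg0 : 0 <= gamma) (hg1 : gamma < 1)
  (ha : 0 < alpha) (hb : 0 < beta)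
  (P V : 'M[R]_(ptop d m + qbot d m))
  (hP12 : ursubmx P = P12 R d m)
  (hP22 : drsubmx P = 0)
  (hV21l : dsubmx (usubmx (dlsubmx V : 'M_(1 + m + d, _)) : 'M_(1 + m, _)) = V21_lam d m alpha)
  (hV21w : dsubmx (dlsubmx V : 'M_(1 + m + d, _)) = V21_w d m beta)
  (hV22l : dsubmx (usubmx (drsubmx V : 'M_(1 + m + d, _)) : 'M_(1 + m, _)) = 0)
  (hV22w : dsubmx (drsubmx V : 'M_(1 + m + d, _)) = 0) :
  forall (S : Type) (A : finType) (phiV : S -> 'cV[R]_d) (phiPi : S -> A -> 'cV[R]_m)
    (lam : 'cV[R]_m) (w : 'cV[R]_d) (s : nat -> S) (a : nat -> A) (r : nat -> R)
    (c : R), c != 0 ->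
  TF (c *: P) (c^-1 *: V) (prompt phiV phiPi gamma lam w n s a r)
  = col_mx (lam_AC phiV phiPi gamma alpha lam w n s a r) (w_AC phiV gamma beta w n s r).
Proof.
move=> S A phiV phiPi lam w s a r c c_neq0.
rewrite /TF lsa_scale_invariant // /lsa prompt_block_diag !(linearD, linearZ) /=.
rewrite attention_block_diag_corner // hP12 data_mx_query_weighting.
rewrite -/(drsubmx _) block_mxKdr.
rewrite -[dlsubmx V]vsubmxK -[usubmx (dlsubmx V)]vsubmxK hV21l hV21w.
rewrite !mul_col_mx !mulmx_sumr /ac_state /lam_AC /w_AC.
rewrite !(col_mxKu, col_mxKd); congr col_mx; congr (_ + _);
  rewrite !scaler_sumr; apply: eq_bigr => i _; rewrite -scalemxAr.
- by rewrite V21_lam_mul_data_col !scalerA; congr (_ *: _); ring.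
- by rewrite V21_w_mul_data_col !scalerA; congr (_ *: _); ring.
Qed.
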